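(* For all integers $m,n\ge 0$, \[ S(m,n)=(-1)^m\sum_{P\in\mathcal{P}_{m+n}}(-1)^{h_{2m}(P)}, \] where $S(m,n)=\frac{(2m)!\,(2n)!}{m!\,n!\,(m+n)!}$.
   Context: For an integer $N\ge 0$, $\mathcal{P}_N$ denotes the set of all lattice paths $P=(P_0,P_1,\dots,P_{2N})$ from $P_0=(0,0)$ to $P_{2N}=(N,N)$ consisting of unit steps to the right (adding $(1,0)$) and up (adding $(0,1)$). For $0\le k\le 2N$, $h_k(P)$ denotes the $y$-coordinate of $P_k$, i.e. the height of $P$ after its $k$-th step. *)

From HB Require Import structures.
From mathcomp Require Import all_boot all_order all_algebra.
Set Implicit Arguments. Unset Strict Implicit. Unset Printing Implicit Defensive.
Import Order.TTheory GRing.Theory Num.Theory.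

(* A lattice path P in P_N is encoded by its sequence of 2N unit steps:
   [true] = up step (0,1), [false] = right step (1,0).  The path starts at
   (0,0); it ends at (N,N) iff it has exactly N up steps (hence N right steps). *)
Definition lattice_path (N : nat) (t : (2 * N).-tuple bool) : bool :=
  count id t == N.

(* h_k(P): the y-coordinate of P_k = number of up steps among the first k steps. *)
Definition height (s : seq bool) (k : nat) : nat := count id (take k s).

Definition superCatalan (m n : nat) : rat :=
  (((2 * m)`! * (2 * n)`!)%:R / (m`! * n`! * (m + n)`!)%:R)%R.

(* Weight an up step by X, negated when it is among the first 2m steps.  Summing
   the product of the weights over all step sequences factors as
   (1 - X)^(2m) (1 + X)^(2n), so the signed count of paths is a coefficient of
   this polynomial.  Because (1 + X)^2 - (1 - X)^2 = 4X, these coefficients obey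
   T(m+1, n) = 4 T(m, n) - T(m, n+1), which S also obeys, and both start from the
   central binomial coefficient C(2n, n) at m = 0. *)

From mathcomp Require Import all_boot all_order all_algebra ring.
Import GRing.Theory Num.Theory.
Local Open Scope ring_scope.

Lemma sum_tuple_prod (R : comPzSemiRingType) (T : finType) (L : nat)
    (F : 'I_L -> T -> R) :
  \sum_(t : L.-tuple T) \prod_(i < L) F i (tnth t i)
  = \prod_(i < L) \sum_(x : T) F i x.
Proof.
rewrite bigA_distr_bigA (reindex (fun t : L.-tuple T => [ffun i => tnth t i])).
  by apply: eq_bigr => t _; apply: eq_bigr => i _; rewrite ffunE.
exists (fun f : {ffun 'I_L -> T} => [tuple f i | i < L]) => [t _|f _].
  by apply: eq_from_tnth => i; rewrite tnth_mktuple ffunE.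
by apply/ffunP => i; rewrite ffunE tnth_mktuple.
Qed.

Section HeightGeneratingFunction.

Variable R : comNzRingType.

Definition step_weight (k i : nat) (up : bool) : {poly R} :=
  if up then (if (i < k)%N then - 'X else 'X) else 1.

Lemma step_weightS k i up : step_weight k i.+1 up = step_weight k.-1 i up.
Proof. by case: k. Qed.

Lemma prod_step_weight (s : seq bool) (k : nat) :
  \prod_(0 <= i < size s) step_weight k i (nth false s i)
  = (-1) ^+ height s k *: 'X^(count id s).
Proof.
elim: s k => [|up s IHs] k; first by rewrite big_nil scale1r expr0.
rewrite /= big_nat_recl //; under eq_bigr do rewrite step_weightS.
rewrite IHs /height; case: up; case: k => [|k] /=; rewrite /step_weight /= ?take0.
- by rewrite expr0 !scale1r -exprS.
- by rewrite !add1n [(-1) ^+ _.+1]exprS mulN1r scaleNr mulNr -scalerAr -exprS.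
- by rewrite mul1r.
- by rewrite mul1r.
Qed.

Lemma prod_step_weight_sum (L k : nat) : (k <= L)%N ->
  \prod_(i < L) \sum_(up : bool) step_weight k i up
  = (1 - 'X) ^+ k * (1 + 'X) ^+ (L - k).
Proof.
move=> le_kL; rewrite -(big_mkord xpredT (fun i => \sum_up step_weight k i up)).
rewrite (big_cat_nat (leq0n k) le_kL) /=.
rewrite -[in (1 - 'X) ^+ k](subn0 k) -!prodr_const_nat.
congr (_ * _); apply: eq_big_nat => i /andP[lo hi]; rewrite big_bool /step_weight.
  by rewrite hi addrC.
by rewrite ltnNge lo addrC.
Qed.

Lemma sum_sign_height (L k N : nat) : (k <= L)%N ->
  \sum_(t : L.-tuple bool | count id t == N) (-1) ^+ height t k
  = ((1 - 'X) ^+ k * (1 + 'X) ^+ (L - k) : {poly R})`_N.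
Proof.
move=> le_kL; rewrite -prod_step_weight_sum // -sum_tuple_prod coef_sum big_mkcond.
apply: eq_bigr => t _.
have -> : \prod_(i < L) step_weight k i (tnth t i)
        = \prod_(0 <= i < size t) step_weight k i (nth false t i).
  by rewrite size_tuple big_mkord; apply: eq_bigr => i _; rewrite (tnth_nth false).
by rewrite prod_step_weight coefZ coefXn eq_sym; case: eqP; rewrite ?mulr1 ?mulr0.
Qed.

Definition sign_gf (m n : nat) : {poly R} := (1 - 'X) ^+ (2 * m) * (1 + 'X) ^+ (2 * n).

Definition path_sign_sum (m n : nat) : R := (-1) ^+ m * (sign_gf m n)`_(m + n).

Lemma sign_gfSr_subSl m n : sign_gf m n.+1 - sign_gf m.+1 n = sign_gf m n * 'X *+ 4.
Proof.
rewrite /sign_gf !mulnS !exprD; ring.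
Qed.

Lemma path_sign_sumSl m n :
  path_sign_sum m.+1 n = path_sign_sum m n *+ 4 - path_sign_sum m n.+1.
Proof.
have := congr1 (coefp (m + n).+1) (sign_gfSr_subSl m n).
rewrite /= coefB coefMn coefMX /= => /eqP; rewrite subr_eq addrC -subr_eq => /eqP.
rewrite /path_sign_sum addSn addnS => <-.
by rewrite exprS mulN1r mulNr mulrBr opprB mulrnAr.
Qed.

Lemma path_sign_sum0n n : path_sign_sum 0 n = 'C(2 * n, n)%:R.
Proof.
rewrite /path_sign_sum /sign_gf !mul1r add0n addrC exprD1n coef_sum.
have lt_n_2n : (n < (2 * n).+1)%N by rewrite ltnS leq_pmull.
rewrite (bigD1 (Ordinal lt_n_2n)) //= coefMn coefXn eqxx big1 ?addr0 //.
move=> i ne_in; rewrite coefMn coefXn.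
by case: eqP => [eq_in|]; [case/eqP: ne_in; apply: val_inj | rewrite mul0rn].
Qed.

End HeightGeneratingFunction.

Lemma natr_fact_neq0 k : k`!%:R != 0 :> rat.
Proof. by rewrite pnatr_eq0 -lt0n fact_gt0. Qed.

Lemma superCatalan0n n : superCatalan 0 n = 'C(2 * n, n)%:R.
Proof.
have le_n_2n : (n <= 2 * n)%N by rewrite leq_pmull.
rewrite /superCatalan mul1n add0n -{1}(bin_fact le_n_2n).
have -> : (2 * n - n = n)%N by rewrite mul2n -addnn addnK.
by rewrite fact0 mul1n natrM mulfK // natrM mulf_neq0 ?natr_fact_neq0.
Qed.

Lemma superCatalanC m n : superCatalan m n = superCatalan n m.
Proof. by rewrite /superCatalan mulnC addnC [(m`! * _)%N]mulnC. Qed.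

Lemma superCatalanSl m n :
  superCatalan m.+1 n * (m + n).+1%:R = superCatalan m n * (2 * (2 * m).+1)%:R.
Proof.
rewrite /superCatalan mulnS add2n addSn !factS !natrM.
field; by rewrite !natr_fact_neq0 -!natrD -!(natrD _ 1) !pnatr_eq0.
Qed.

Lemma superCatalanSr m n :
  superCatalan m n.+1 * (m + n).+1%:R = superCatalan m n * (2 * (2 * n).+1)%:R.
Proof. by rewrite superCatalanC addnC superCatalanSl superCatalanC. Qed.

Lemma superCatalanS m n :
  superCatalan m.+1 n = superCatalan m n *+ 4 - superCatalan m n.+1.
Proof.
have nz : (m + n).+1%:R != 0 :> rat by rewrite pnatr_eq0.
apply: (mulIf nz); rewrite mulrBl mulrnAl superCatalanSl superCatalanSr.
apply/eqP; rewrite eq_sym subr_eq -mulrnAr -mulrDr; apply/eqP; congr (_ * _).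
rewrite -natrD -mulr_natr -natrM; congr (_%:R); ring.
Qed.

Lemma path_sign_sum_superCatalan m n : path_sign_sum rat m n = superCatalan m n.
Proof.
elim: m n => [|m IHm] n; first by rewrite path_sign_sum0n superCatalan0n.
by rewrite path_sign_sumSl superCatalanS !IHm.
Qed.

Theorem mainTheorem1 (m n : nat) :
  superCatalan m n =
  ((-1) ^+ m * \sum_(t : (2 * (m + n)).-tuple bool | lattice_path t)
                 (-1) ^+ (height t (2 * m)) :> rat)%R.
Proof.
have le_2m : (2 * m <= 2 * (m + n))%N by rewrite leq_mul2l leq_addr orbT.
rewrite -path_sign_sum_superCatalan /path_sign_sum /sign_gf sum_sign_height //.
by rewrite mulnDr addKn.
Qed.
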